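(* Let $N$ be a nonnegative integer random variable with $E[N]<\infty$ and let $p<1$. Let $\mathbf N=(N_i)_{i\in\mathbb{Z}}$ be i.i.d. with law $N$, and let each bond $(i,i+n)$, $1\le n\le N_i$, be open independently with probability $p$. Let $A$ be the event that there exist $i\ge1$ and $j\ge0$ such that $(-i,j)$ is a bond of $G_{\mathbf N}$ (i.e. $i+j\le N_{-i}$) and it is open. Then $P(A)<1$.
   Context: $G_{\mathbf N}$ is the oriented graph on $\mathbb{Z}$ with bonds $\{(i,i+n):i\in\mathbb{Z},\ 1\le n\le N_i\}$; given $\mathbf N$, bonds are open independently with probability $p$. *)

From HB Require Import structures.
From mathcomp Require Import all_boot all_order all_algebra.
From mathcomp Require Import all_classical all_reals all_analysis.
Set Implicit Arguments. Unset Strict Implicit. Unset Printing Implicit Defensive.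
Import Order.TTheory GRing.Theory Num.Theory.
Local Open Scope classical_set_scope.
Local Open Scope ring_scope.

Definition indep_discrete d (T : measurableType d) (R : realType)
  (P : probability T R) (I : eqType) (D : pred I) (X : I -> T -> nat) : Prop :=
  forall (F : seq I) (x : I -> nat), uniq F -> all D F ->
    P (\bigcap_(i in [set` F]) (X i @^-1` [set x i]))
    = (\big[*%E/1%E]_(i <- F) P (X i @^-1` [set x i]))%E.

(* Index set of the joint family: inl i <-> N_i ; inr (i, n) <-> bond (i, i+n). *)
Definition perc_index := (int + (int * nat))%type.

Definition perc_admissible : pred perc_index :=
  fun k => match k with inl _ => true | inr (_, n) => (0 < n)%N end.

Definition perc_family (T : Type) (Nv : int -> T -> nat)
  (op : int -> nat -> T -> bool) : perc_index -> T -> nat :=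
  fun k => match k with
           | inl i => Nv i
           | inr (i, n) => fun w => nat_of_bool (op i n w)
           end.

Definition crossing_event (T : Type) (Nv : int -> T -> nat)
  (op : int -> nat -> T -> bool) : set T :=
  [set w | exists i j : nat, (1 <= i)%N /\ (i + j <= Nv (- (i%:Z)) w)%N
                              /\ op (- (i%:Z)) (i + j)%N w].

From HB Require Import structures.
From mathcomp Require Import all_boot all_order all_algebra.
From mathcomp Require Import all_classical all_reals all_analysis.
From mathcomp Require Import lra.
Import Order.TTheory GRing.Theory Num.Theory.
Set Implicit Arguments. Unset Strict Implicit. Unset Printing Implicit Defensive.
Local Open Scope classical_set_scope.
Local Open Scope ring_scope.

(* Pick k0 with P(N = k0) > 0 and, since E[N] < oo, an M with
   sum_(k > M) k P(N = k) < 1.  Let D ("blocked") be the event that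
   N_{-i} = k0 for 1 <= i <= M and that every bond (-i, -i + n), 1 <= n <= k0,
   of these sites is closed.  D only involves finitely many independent
   variables, each with positive probability (p < 1), so P(D) > 0.  On D no
   bond starting at -M, ..., -1 is open, so a crossing forces N_{-i} >= i for
   some i > M; by independence of N_{-i} from D and a layer-cake count,
     P(A) <= P(not D) + P(D) * sum_(i > M) P(N >= i)
          <= 1 - P(D) + P(D) * sum_(k > M) k P(N = k) < 1.
   The file first proves the general facts used (independence of one more
   variable, positive atoms, tails of convergent series, the layer-cake
   bound, double subadditivity), then the combinatorics of the finite block,
   then the estimate crossing_le, from which mainTheorem7 follows. *)

Lemma set_seq_cons (I : eqType) (x : I) (s : seq I) :
  [set` (x :: s)] = x |` [set` s].
Proof.
apply/seteqP; split => y /=; rewrite /= inE.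
  by case/orP => [/eqP ->|ys]; [left|right].
by case => [->|ys]; rewrite ?eqxx ?ys ?orbT.
Qed.

Lemma prode_gt0 (R : realType) (I : Type) (s : seq I) (Q : pred I)
    (f : I -> \bar R) :
  (forall i, Q i -> 0 < f i)%E -> (0 < \prod_(i <- s | Q i) f i)%E.
Proof. by move=> f0; elim/big_ind: _ => // x y; exact: mule_gt0. Qed.

Lemma indep_discrete_cons d (T : measurableType d) (R : realType)
    (P : probability T R) (I : eqType) (D : pred I) (X : I -> T -> nat)
    (j : I) (v : nat) (F : seq I) (x : I -> nat) :
  indep_discrete P D X -> D j -> all D F -> uniq F -> j \notin F ->
  P (X j @^-1` [set v] `&` \bigcap_(i in [set` F]) X i @^-1` [set x i])
  = (P (X j @^-1` [set v]) * P (\bigcap_(i in [set` F]) X i @^-1` [set x i]))%E.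
Proof.
move=> hindep Dj DF uF jF.
pose y i := if i == j then v else x i.
have yF i : i \in F -> y i = x i.
  by rewrite /y; case: eqP => // -> jF'; rewrite jF' in jF.
have ujF : uniq (j :: F) by rewrite /= jF uF.
have DjF : all D (j :: F) by rewrite /= Dj DF.
have yj : y j = v by rewrite /y eqxx.
have := hindep (j :: F) y ujF DjF.
rewrite set_seq_cons bigcap_setU1 big_cons yj.
have capF : \bigcap_(i in [set` F]) X i @^-1` [set y i]
          = \bigcap_(i in [set` F]) X i @^-1` [set x i].
  by apply: eq_bigcapr => i /yF ->.
rewrite capF (hindep F x uF DF) => ->; congr (_ * _)%E.
by apply: eq_big_seq => i /yF ->.
Qed.

Lemma exists_positive_atom d (T : measurableType d) (R : realType)
    (P : probability T R) (X : T -> nat) :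
  (forall k, measurable (X @^-1` [set k])) ->
  exists k, (0 < P (X @^-1` [set k]))%E.
Proof.
move=> Xmeas; apply: contrapT => /forallNP atoms0.
have cover : [set: T] = \bigcup_(k in setT) (X @^-1` [set k]).
  by apply/seteqP; split => w // _; exists (X w).
have := probability_setT P; rewrite cover measure_bigcup //; last first.
  by move=> a b _ _ [w [/= <- <-]].
rewrite eseries0 => [/esym/eqP|k _ _]; first by rewrite onee_eq0.
by apply/eqP; rewrite eq_le measure_ge0 andbT leNgt; apply/negP/atoms0.
Qed.

Lemma nneseries_tail_lt (R : realType) (f : nat -> \bar R) (e : R) :
  0 < e -> (forall k, 0 <= f k)%E -> (\sum_(0 <= k <oo) f k < +oo)%E ->
  exists M, forall N, (M <= N)%N -> (\sum_(N <= k <oo) f k < e%:E)%E.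
Proof.
move=> e0 f0 fsum.
have /fine_cvgP[tail_fin tail_cvg] :=
  @nneseries_tail_cvg R f xpredT fsum (fun k _ => f0 k).
have tail_lt := cvgr_lt 0 tail_cvg e e0.
have [M _ HM] : \forall N \near \oo,
    (\sum_(N <= k <oo) f k)%E \is a fin_num /\ fine (\sum_(N <= k <oo) f k)%E < e.
  by near=> N; split; near: N; [exact: tail_fin|exact: tail_lt].
by exists M => N /HM[fin lt]; rewrite -(fineK fin) lte_fin.
Unshelve. all: by end_near.
Qed.

(* Layer-cake bound: sum_(i > M) sum_(k >= i) q k, i.e. the tail of
   sum_i P(N >= i), is at most sum_(k > M) k q k. *)
Lemma layer_cake_tail (R : realType) (q : nat -> R) (M : nat) :
  (forall k, 0 <= q k) ->
  (\sum_(i <oo) \sum_(k <oo) (if (M < i <= k)%N then q k else 0)%:E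
   <= \sum_(M.+1 <= k <oo) (k%:R * q k)%:E)%E.
Proof.
move=> q0.
have a0 i k : (0 <= (if (M < i <= k)%N then q k else 0)%:E)%E.
  by rewrite lee_fin; case: ifP.
rewrite nneseries_interchange //.
rewrite [X in (_ <= X)%E]eseries_cond [X in (_ <= X)%E]eseries_mkcond.
apply: lee_nneseries => [k _ _|k _].
  exact: nneseries_ge0.
rewrite (nneseries_split 0 k.+1) //.
rewrite add0n (@eseries0 _ _ k.+1 xpredT); last first.
  by move=> i hi _; case: ifP => // /andP[_ ik]; rewrite ltnNge ik in hi.
rewrite adde0 sumEFin /=.
case: (ltnP M k) => hMk; last first.
  rewrite big1 ?lexx // => i _; case: ifP => // /andP[Mi ik].
  by have := leq_trans ik hMk; rewrite leqNgt Mi.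
rewrite lee_fin (@le_trans _ _ (\sum_(0 <= i < k.+1) (if (0 < i)%N then q k else 0))) //.
  apply: ler_sum => i _; case: ifP => [/andP[Mi _]|_].
    by rewrite (leq_ltn_trans (leq0n M) Mi).
  by case: ifP.
rewrite big_nat_recl // /= add0r (eq_bigr (fun _ => q k)) // sumr_const_nat subn0.
by rewrite mulr_natl.
Qed.

Lemma measure_bigcup2_le d (T : measurableType d) (R : realType)
    (mu : {measure set T -> \bar R}) (G : nat -> nat -> set T) :
  (forall i k, measurable (G i k)) ->
  (mu (\bigcup_i \bigcup_k G i k) <= \sum_(i <oo) \sum_(k <oo) mu (G i k))%E.
Proof.
move=> Gmeas; have Gi i : measurable (\bigcup_k G i k).
  by apply: bigcup_measurable => k _.
apply: le_trans (measure_sigma_subadditive _ Gi _ _) _ => //.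
  by apply: bigcup_measurable => i _.
apply: lee_nneseries => [i _ _|i _]; first exact: measure_ge0.
exact: measure_sigma_subadditive.
Qed.

Definition near_block (M k0 : nat) : seq perc_index :=
  [seq inl (- i%:Z) | i <- iota 1 M] ++
  [seq inr (- i%:Z, n) | i <- iota 1 M, n <- iota 1 k0].

Definition block_value (k0 : nat) (j : perc_index) : nat :=
  if j is inl _ then k0 else 0.

Lemma neg_nat_inj : injective (fun i : nat => - (i%:Z)).
Proof. by move=> a b /oppr_inj []. Qed.

Lemma near_block_uniq M k0 : uniq (near_block M k0).
Proof.
rewrite cat_uniq; apply/and3P; split.
- by rewrite map_inj_uniq ?iota_uniq // => a b [] /neg_nat_inj.
- by apply/hasPn => _ /allpairsP[[a b] [_ _ ->]]; apply/negP => /mapP[].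
- apply: allpairs_uniq; rewrite ?iota_uniq //.
  by move=> [a b] [c e] _ _ [/neg_nat_inj -> ->].
Qed.

Lemma near_block_admissible M k0 : all perc_admissible (near_block M k0).
Proof.
rewrite all_cat; apply/andP; split; first by apply/allP => _ /mapP[c _ ->].
apply/allP => _ /allpairsP[[a b] [_ /= hb ->]].
by move: hb; rewrite mem_iota => /andP[].
Qed.

Lemma mem_near_block_inl M k0 i :
  (inl (- i%:Z) \in near_block M k0) = (0 < i <= M)%N.
Proof.
rewrite mem_cat; apply/orP/idP => [[/mapP[c hc [/neg_nat_inj ->]]|]|hi].
- by move: hc; rewrite mem_iota add1n ltnS.
- by case/allpairsP => -[? ?] [_ _].
- by left; apply/mapP; exists i; rewrite // mem_iota add1n ltnS.
Qed.

Lemma mem_near_block_inr M k0 i n : (0 < i <= M)%N -> (0 < n <= k0)%N ->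
  inr (- i%:Z, n) \in near_block M k0.
Proof.
move=> hi hn; rewrite mem_cat; apply/orP; right.
by apply/allpairsP; exists (i, n); rewrite !mem_iota !add1n !ltnS.
Qed.

Section crossing.
Variables (d : measure_display) (T : measurableType d) (R : realType).
Variables (P : probability T R) (Nv : int -> T -> nat).
Variables (op : int -> nat -> T -> bool) (p : R).
Hypothesis hp1 : p < 1.
Hypothesis hNmeas : forall i k, measurable (Nv i @^-1` [set k]).
Hypothesis hopmeas : forall i n, measurable (op i n @^-1` [set true]).
Hypothesis hident : forall i k, P (Nv i @^-1` [set k]) = P (Nv 0 @^-1` [set k]).
Hypothesis hbern : forall i n, (0 < n)%N -> P (op i n @^-1` [set true]) = p%:E.
Hypothesis hindep : indep_discrete P perc_admissible (perc_family Nv op).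

Definition law (k : nat) : R := fine (P (Nv 0 @^-1` [set k])).

Lemma P_Nv i k : P (Nv i @^-1` [set k]) = (law k)%:E.
Proof. by rewrite hident /law fineK // fin_num_measure. Qed.

Lemma law_ge0 k : 0 <= law k.
Proof. by rewrite -lee_fin -(P_Nv 0) measure_ge0. Qed.

Lemma perc_family_measurable j v : measurable (perc_family Nv op j @^-1` [set v]).
Proof.
case: j => [i|[i n]] /=; first exact: hNmeas.
have -> : (fun w => nat_of_bool (op i n w)) @^-1` [set v] =
    if v == 1%N then op i n @^-1` [set true]
    else if v == 0%N then ~` (op i n @^-1` [set true]) else set0.
  by apply/seteqP; split => w; case: v => [|[|v]] /=; case: (op i n w).
case: eqP => _; first exact: hopmeas.
by case: eqP => _; [exact: measurableC|exact: measurable0].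
Qed.

Lemma P_closed_bond i n : (0 < n)%N ->
  P (perc_family Nv op (inr (i, n)) @^-1` [set 0%N]) = (1 - p)%:E.
Proof.
move=> n0; have -> : perc_family Nv op (inr (i, n)) @^-1` [set 0%N]
    = ~` (op i n @^-1` [set true]).
  by apply/seteqP; split => w /=; case: (op i n w).
by rewrite probability_setC ?hbern // EFinB.
Qed.

Definition blocked (M k0 : nat) : set T :=
  \bigcap_(j in [set` near_block M k0])
    perc_family Nv op j @^-1` [set block_value k0 j].

Lemma blocked_measurable M k0 : measurable (blocked M k0).
Proof.
apply: fin_bigcap_measurable; first exact: finite_seq.
by move=> j _; exact: perc_family_measurable.
Qed.

(* D has positive probability as soon as N charges k0: it is a finite
   intersection of independent events of positive probability. *)
Lemma blocked_pos M k0 : (0 < P (Nv 0%R @^-1` [set k0]))%E ->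
  (0 < P (blocked M k0))%E.
Proof.
move=> atom_k0; rewrite /blocked hindep ?near_block_uniq ?near_block_admissible //.
rewrite big_seq; apply: prode_gt0 => -[i|[i n]] /(allP (near_block_admissible M k0)) /=.
  by rewrite hident.
by move=> n0; rewrite P_closed_bond // lte_fin subr_gt0.
Qed.

Lemma blocked_far_indep M k0 i k : (M < i)%N ->
  P (Nv (- i%:Z) @^-1` [set k] `&` blocked M k0)
  = ((law k)%:E * P (blocked M k0))%E.
Proof.
move=> Mi; rewrite -(P_Nv (- i%:Z)).
apply: (indep_discrete_cons (j := inl (- i%:Z)) k (block_value k0) hindep erefl
  (near_block_admissible M k0) (near_block_uniq M k0)).
by rewrite mem_near_block_inl (leqNgt i M) Mi andbF.
Qed.

Lemma crossing_event_measurable : measurable (crossing_event Nv op).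
Proof.
have -> : crossing_event Nv op = \bigcup_i \bigcup_j \bigcup_k
    (if ((1 <= i) && (i + j <= k))%N then
       Nv (- i%:Z) @^-1` [set k] `&` op (- i%:Z) (i + j) @^-1` [set true]
     else set0).
  apply/seteqP; split => w /=.
  - move=> [i [j [i1 [hle hop]]]]; exists i => //; exists j => //.
    by exists (Nv (- i%:Z) w) => //; rewrite i1 hle.
  - move=> [i _ [j _ [k _]]]; case: ifP => // /andP[i1 hle] [/= hk hop].
    by exists i, j; rewrite hk.
do 3 (apply: bigcup_measurable => ? _).
by case: ifP => _; [exact: measurableI|exact: measurable0].
Qed.

Definition far_piece (M k0 i k : nat) : set T :=
  if (M < i <= k)%N then Nv (- i%:Z) @^-1` [set k] `&` blocked M k0 else set0.

Definition far_event (M k0 : nat) : set T :=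
  \bigcup_i \bigcup_k far_piece M k0 i k.

Lemma far_piece_measurable M k0 i k : measurable (far_piece M k0 i k).
Proof.
rewrite /far_piece; case: ifP => _; last exact: measurable0.
exact: measurableI (hNmeas _ _) (blocked_measurable M k0).
Qed.

(* On D, the sites -1, ..., -M cannot carry a crossing (their bonds reach at
   most k0 and are closed), so a crossing needs a far site with N_{-i} >= i. *)
Lemma crossing_sub_far M k0 :
  crossing_event Nv op `<=` ~` blocked M k0 `|` far_event M k0.
Proof.
move=> w [i [j [i1 [hle hop]]]].
case: (pselect (blocked M k0 w)) => blocked_w; [right|by left].
have block_at jj : jj \in near_block M k0 ->
    perc_family Nv op jj w = block_value k0 jj.
  exact: blocked_w.
case: (leqP i M) => hiM.
  have iblock : (0 < i <= M)%N by rewrite i1.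
  have Ni : Nv (- i%:Z) w = k0.
    by apply: (block_at (inl _)); rewrite mem_near_block_inl.
  have /block_at /= : inr (- i%:Z, (i + j)%N) \in near_block M k0.
    by apply: mem_near_block_inr; rewrite // -Ni addn_gt0 i1 hle.
  by rewrite hop.
exists i => //; exists (Nv (- i%:Z) w) => //.
by rewrite /far_piece hiM (leq_trans (leq_addr j i) hle).
Qed.

Lemma far_event_bound M k0 :
  (P (far_event M k0) <= P (blocked M k0) *
     \sum_(i <oo) \sum_(k <oo) (if (M < i <= k)%N then law k else 0)%:E)%E.
Proof.
have blocked_fin := fin_num_measure P _ (blocked_measurable M k0).
have a0 i k : (0 <= (if (M < i <= k)%N then law k else 0)%:E)%E.
  by rewrite lee_fin; case: ifP => // _; exact: law_ge0.
apply: le_trans (measure_bigcup2_le _ (far_piece_measurable M k0)) _.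
rewrite -(fineK blocked_fin) -nneseriesZl; last by move=> i _; exact: nneseries_ge0.
apply: lee_nneseries => [i _ _|i _]; first exact: nneseries_ge0.
rewrite -nneseriesZl //.
apply: lee_nneseries => [k _ _|k _]; first exact: measure_ge0.
rewrite /far_piece; case: ifP => [/andP[Mi _]|_]; last by rewrite measure0 mule0.
rewrite (fineK blocked_fin) muleC le_eqVlt; apply/orP; left; apply/eqP.
exact: blocked_far_indep.
Qed.

Lemma mean_law : (\sum_(0 <= k <oo) ((k%:R : R)%:E * P (Nv 0%R @^-1` [set k]))
                 = \sum_(0 <= k <oo) (k%:R * law k)%:E)%E.
Proof. by apply: eq_eseriesr => k _; rewrite EFinM P_Nv. Qed.

Lemma crossing_le M k0 :
  (P (crossing_event Nv op) <= 1 - P (blocked M k0)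
     + P (blocked M k0) * \sum_(M.+1 <= k <oo) (k%:R * law k)%:E)%E.
Proof.
have Dmeas := blocked_measurable M k0.
have Fmeas : measurable (far_event M k0).
  by do 2 (apply: bigcup_measurable => ? _); exact: far_piece_measurable.
apply: le_trans (le_measure P (mem_set crossing_event_measurable)
  (mem_set (measurableU _ _ (measurableC Dmeas) Fmeas)) (crossing_sub_far M k0)) _.
apply: le_trans (measureU2 P (measurableC Dmeas) Fmeas) _.
apply: leeD.
  by rewrite le_eqVlt; apply/orP; left; apply/eqP; exact: probability_setC.
apply: le_trans (far_event_bound M k0) _.
by apply: lee_wpmul2l; [exact: measure_ge0|exact: layer_cake_tail law_ge0].
Qed.

End crossing.

Theorem mainTheorem7 (d : measure_display) (T : measurableType d) (R : realType)
  (P : probability T R) (Nv : int -> T -> nat) (op : int -> nat -> T -> bool)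
  (p : R) (hp0 : 0 <= p) (hp1 : p < 1)
  (hNmeas : forall i k, measurable (Nv i @^-1` [set k]))
  (hopmeas : forall i n, measurable (op i n @^-1` [set true]))
  (hident : forall i k, P (Nv i @^-1` [set k]) = P (Nv 0 @^-1` [set k]))
  (hmean : (\sum_(0 <= k <oo) ((k%:R : R)%:E * P (Nv 0%R @^-1` [set k]))%E < +oo)%E)
  (hbern : forall i n, (0 < n)%N -> P (op i n @^-1` [set true]) = p%:E)
  (hindep : indep_discrete P perc_admissible (perc_family Nv op)) :
  (P (crossing_event Nv op) < 1)%E.
Proof.
have [k0 atom_k0] := exists_positive_atom P (hNmeas 0).
have mean_terms_ge0 k : (0 <= (k%:R * law P Nv k)%:E)%E.
  by rewrite lee_fin mulr_ge0 // (law_ge0 hNmeas hident).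
have mean_fin := hmean; rewrite (mean_law hNmeas hident) in mean_fin.
have [M tail_lt] := nneseries_tail_lt ltr01 mean_terms_ge0 mean_fin.
have := tail_lt M.+1 (leqnSn M).
set t := (\sum_(M.+1 <= k <oo) _)%E => t_lt1.
have t_fin : t \is a fin_num.
  rewrite ge0_fin_numE; first exact: lt_trans t_lt1 (ltry 1).
  by apply: nneseries_ge0 => k _ _.
have D_pos := blocked_pos hp1 hopmeas hident hbern hindep M atom_k0.
pose g := fine (P (blocked Nv op M k0)).
have gE : P (blocked Nv op M k0) = g%:E.
  by rewrite fineK // fin_num_measure //; exact: blocked_measurable.
have tE : t = (fine t)%:E by rewrite fineK.
have g_pos : 0 < g by rewrite -lte_fin -gE.
have tail_lt1 : fine t < 1 by rewrite -lte_fin -tE.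
apply: le_lt_trans (crossing_le hNmeas hopmeas hident hindep M k0) _.
rewrite -/t gE tE -EFinM -EFinB -EFinD lte_fin.
nra.
Qed.
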